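(* Let $h$ and $k$ be positive integers. If $a$ and $\ell$ are positive integers such that $k = a\ell$, then the sumset size set $\mathcal{R}_{\mathbf{Z}}(h,k)$ contains the arithmetic progression \[ \left\{ (\ell-1)hb + (a-1)h + 1 : b \in [a,(a-1)h+1] \right\}. \]
   Context: For a positive integer $h$ and a finite set $A$ of integers, $hA$ denotes the set of all sums $a_1+\cdots+a_h$ with $a_1,\ldots,a_h \in A$ (not necessarily distinct). The sumset size set is $\mathcal{R}_{\mathbf{Z}}(h,k) = \{ |hA| : A \subseteq \mathbf{Z},\ |A| = k\}$. For real $u,v$, $[u,v] = \{n \in \mathbf{Z} : u \le n \le v\}$. *)

From mathcomp Require Import all_boot all_order all_algebra.
Set Implicit Arguments. Unset Strict Implicit. Unset Printing Implicit Defensive.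
Import GRing.Theory Num.Theory.
Local Open Scope ring_scope.

Fixpoint hsums (h : nat) (A : seq int) : seq int :=
  match h with
  | 0%N => [:: 0]
  | h'.+1 => [seq x + y | x <- A, y <- hsums h' A]
  end.

Definition hsumset (h : nat) (A : seq int) : seq int := undup (hsums h A).

(* n \in R_Z(h,k): there is a set A of k integers with |hA| = n. *)
Definition in_R_Z (h k n : nat) : Prop :=
  exists A : seq int, [/\ uniq A, size A = k & size (hsumset h A) = n].

From mathcomp Require Import all_boot all_order all_algebra.
From mathcomp Require Import zify.

(* The witness is the grid A = {i + b j : i < a, j < l}, of size a l when a <= b.
   Its h-fold sumset is {u + b v : u <= h(a-1), v <= h(l-1)}, and the condition
   b <= h(a-1) + 1 makes consecutive blocks [b v, b v + h(a-1)] overlap or abut,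
   so hA is the whole interval [0, b h(l-1) + h(a-1)]. *)

Definition grid (a l b : nat) : seq int :=
  [seq Posz (i + b * j) | i <- iota 0 a, j <- iota 0 l].

Lemma size_grid (a l b : nat) : size (grid a l b) = a * l.
Proof. by rewrite size_allpairs !size_iota. Qed.

Lemma digits_inj (b i j i' j' : nat) :
  i < b -> i' < b -> i + b * j = i' + b * j' -> i = i' /\ j = j'.
Proof.
have digits (p q : nat) : p < b -> (p + b * q) %% b = p /\ (p + b * q) %/ b = q.
  move=> pb; have b_gt0 : 0 < b by lia.
  by rewrite addnC mulnC modnMDl divnMDl // modn_small // divn_small // addn0.
move=> ib i'b eq_ij; have [mi di] := digits i j ib; have [mi' di'] := digits i' j' i'b.
by split; [rewrite -mi -mi' eq_ij | rewrite -di -di' eq_ij].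
Qed.

Lemma grid_uniq (a l b : nat) : a <= b -> uniq (grid a l b).
Proof.
move=> ab; apply: allpairs_uniq; try exact: iota_uniq.
move=> [i j] [i' j'] /allpairsP [[x y] [/= x_a _ [-> ->]]].
move=> /allpairsP [[x' y'] [/= x'_a _ [-> ->]]] /= [].
move: x_a x'_a; rewrite !mem_iota => x_a x'_a /digits_inj digits_eq.
by case: digits_eq => [||-> ->] //; lia.
Qed.

Lemma leq_mulSl_split (c m u : nat) :
  u <= m.+1 * c -> exists i w, [/\ i <= c, w <= m * c & u = i + w].
Proof.
by move=> le_u; exists (minn u c), (u - minn u c); split; lia.
Qed.

Lemma mem_hsums_grid {a l b m : nat} {x : int} : 0 < a -> 0 < l ->
  (x \in hsums m (grid a l b)) <->
  exists u v, [/\ u <= m * (a - 1), v <= m * (l - 1) & x = Posz (u + b * v)].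
Proof.
move=> a_gt0 l_gt0; elim: m x => [|m IHm] x /=.
  rewrite inE; split=> [/eqP ->|[u [v [+ + ->]]]]; first by exists 0, 0; rewrite !muln0.
  by rewrite !mul0n !leqn0 => /eqP -> /eqP ->; rewrite muln0.
split.
  case/allpairsP => [[y z] [/= /allpairsP [[i j] [/= + + ->]] + ->]].
  rewrite !mem_iota /= => lt_i lt_j /IHm [u [v [le_u le_v ->]]].
  by exists (i + u), (j + v); split; lia.
case=> u [v [/leq_mulSl_split [i [u' [le_i le_u' ->]]]]].
case/leq_mulSl_split => j [v' [le_j le_v' ->]] ->.
apply/allpairsP; exists (Posz (i + b * j), Posz (u' + b * v')); split => /=.
- by apply/allpairsP; exists (i, j); rewrite !mem_iota; split => //=; lia.
- by apply/IHm; exists u', v'.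
- by rewrite -PoszD mulnDr; congr Posz; lia.
Qed.

Lemma digits_cover_interval (b c M n : nat) : 0 < b -> b <= c.+1 ->
  n <= b * M + c -> exists u v, [/\ u <= c, v <= M & n = u + b * v].
Proof.
move=> b_gt0 le_b le_n; have [le_q|lt_q] := leqP (n %/ b) M.
  exists (n %% b), (n %/ b); split => //; last by rewrite mulnC addnC -divn_eq.
  by have := ltn_pmod n b_gt0; lia.
have le_bM : b * M <= n.
  by apply: leq_trans (leq_divM n b); rewrite mulnC leq_mul2r ltnW ?orbT.
by exists (n - b * M), M; split => //; lia.
Qed.

Lemma hsumset_grid (h : nat) {a l b : nat} :
  0 < a -> 0 < l -> 0 < b -> b <= (a - 1) * h + 1 ->
  perm_eq (hsumset h (grid a l b))
          [seq Posz n | n <- iota 0 (b * (h * (l - 1)) + h * (a - 1)).+1].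
Proof.
move=> a_gt0 l_gt0 b_gt0 le_b; apply: uniq_perm; first exact: undup_uniq.
  by rewrite map_inj_uniq ?iota_uniq // => x y [].
move=> x; rewrite mem_undup; apply/idP/idP.
  case/(mem_hsums_grid a_gt0 l_gt0) => u [v [le_u le_v ->]].
  by apply/mapP; exists (u + b * v) => //; rewrite mem_iota; nia.
case/mapP => n; rewrite mem_iota add0n => /andP [_ lt_n] ->.
have [||u [v [le_u le_v ->]]] := @digits_cover_interval b (h * (a - 1)) (h * (l - 1)) n b_gt0.
- lia.
- by rewrite ltnS in lt_n.
by apply/(mem_hsums_grid a_gt0 l_gt0); exists u, v.
Qed.

Theorem mainTheorem3 (h k a l : nat) :
  (0 < h)%N -> (0 < k)%N -> (0 < a)%N -> (0 < l)%N -> k = (a * l)%N ->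
  forall b : nat, (a <= b <= (a - 1) * h + 1)%N ->
    in_R_Z h k ((l - 1) * h * b + (a - 1) * h + 1)%N.
Proof.
move=> _ _ a_gt0 l_gt0 -> b /andP [le_ab le_b].
exists (grid a l b); split; [exact: grid_uniq | exact: size_grid |].
rewrite (perm_size (hsumset_grid h a_gt0 l_gt0 _ le_b)) ?size_map ?size_iota; lia.
Qed.
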